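(* Let $p$ be an odd prime, let $m\ge 0$ and $i\ge 0$ be integers, and let $n=(m+i)p-i=i(p-1)+mp\ge 1$. Let $u$ be a partition with $\omega(u)=n$ and $d(u)\le i+1$. Then there exists a reduced partition $u'$ such that $\omega(u')=n$, $d(u')\le i+1$ and $v_p(\tau_u)\ge v_p(\tau_{u'})$.
   Context: A partition is a sequence $u=(u_1,u_2,\dots)$ of nonnegative integers, almost all zero ($u_i$ = number of parts equal to $i$); weight $\omega(u)=\sum_i iu_i$, degree $d(u)=\sum_i u_i$. For a partition $u$ of weight $r\ge1$ with degree $d$, $\gamma_u=\prod_{i\ge1}(i+1)^{u_i}u_i!$ and $\tau_u=(-1)^{d-1}\frac{(r+d-2)!}{\gamma_u}$. $v_p$ is the $p$-adic valuation. A partition $u$ is called reduced if every part $i$ with $u_i\ne 0$ is of the form $p^\alpha-1$ ($\alpha\ge1$), except for at most one part $g$ not of this form, and for such a $g$ one has $u_g=1$. *)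

From mathcomp Require Import all_boot all_order all_algebra.
Set Implicit Arguments. Unset Strict Implicit. Unset Printing Implicit Defensive.
Import Order.TTheory GRing.Theory Num.Theory.

(* A ipartition is encoded as a finite sequence s : seq nat; the multiplicity
   u_i of the part i (i >= 1) is  nth 0 s (i-1).  Trailing zeros are
   irrelevant; every finitely supported sequence (u_1, u_2, ...) arises. *)
Definition ipartition := seq nat.

Definition mult (u : ipartition) (i : nat) : nat :=
  if i is j.+1 then nth 0 u j else 0.

Definition weight (u : ipartition) : nat :=
  \sum_(1 <= i < (size u).+1) i * mult u i.

Definition degree (u : ipartition) : nat :=
  \sum_(1 <= i < (size u).+1) mult u i.

Definition gamma (u : ipartition) : nat :=
  \prod_(1 <= i < (size u).+1) ((i.+1) ^ (mult u i) * (mult u i)`!).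

Definition tau (u : ipartition) : rat :=
  ((-1) ^+ (degree u).-1 *
  (((weight u + degree u - 2)`!)%:R / (gamma u)%:R))%R.

(* p-adic valuation of a rational number (value 0 at 0, not used there) *)
Definition vp (p : nat) (q : rat) : int :=
  ((logn p `|numq q|%N)%:Z - (logn p `|denq q|%N)%:Z)%R.

Definition pform (p i : nat) : Prop := exists2 a : nat, 1 <= a & i = p ^ a - 1.

Definition reduced (p : nat) (u : ipartition) : Prop :=
  exists g : nat, forall i : nat, 1 <= i -> mult u i <> 0 ->
    pform p i \/ (i = g /\ mult u g = 1).

From mathcomp Require Import all_boot all_order all_algebra.
From mathcomp Require Import zify.
Import Order.TTheory GRing.Theory Num.Theory.
Set Implicit Arguments. Unset Strict Implicit. Unset Printing Implicit Defensive.

(* Let s be the multiset of parts of u and t = s + 1 the shifted parts.  Then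
   gamma_u = prod t * prod_x (mult x)!, so v_p(tau_u) = v_p((n+d-2)!) - pval(t), where
   pval(w) = v_p(prod w * prod_x (mult_w x)!), and we must increase pval(t) without
   changing the weight n, paying for any loss in the degree d with (n+d-2)!.
   - If p divides every t, write t = p w: it suffices to maximise pval(w) over multisets of
     positive integers of fixed size and sum.  Parts of w prime to p only count through
     their multiplicities; if one of them exceeds 1, these multiplicity factorials are
     dominated by a few 1s and one power p^h, every part divisible by p is replaced by its
     p-part, and the freed weight is collected into a single new part.  Otherwise the parts
     prime to p are all 1, and we divide the remaining parts by p and recurse.
   - Otherwise replace each part divisible by p by its p-part and merge all the parts prime
     to p, together with the freed weight, into one new part.  The loss in (n+d-2)! is
     covered by the multiplicity factorials of the merged parts, because either one of the
     multiplicities is prime to p, or p divides n + d. *)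

Definition mfact (s : seq nat) : nat := \prod_(x <- undup s) (count_mem x s)`!.

Lemma mfact_gt0 s : 0 < mfact s.
Proof. by rewrite prodn_gt0 // => x; rewrite fact_gt0. Qed.

Lemma big_undup_cover (R : Type) (idx : R) (op : Monoid.com_law idx)
    (T : eqType) (r s : seq T) (G : T -> R) :
  uniq r -> {subset s <= r} -> (forall x, x \notin s -> G x = idx) ->
  \big[op/idx]_(x <- undup s) G x = \big[op/idx]_(x <- r) G x.
Proof.
move=> r_uniq s_r G_idx; rewrite [RHS](bigID (mem s)) /= [X in op _ X]big1 ?Monoid.mulm1.
  rewrite -[in RHS]big_filter; apply/perm_big/uniq_perm; rewrite ?undup_uniq ?filter_uniq //.
  by move=> x; rewrite mem_undup mem_filter; case: (boolP (x \in s)) => // /s_r ->.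
by move=> x /G_idx.
Qed.

Lemma big_count_cover (R : Type) (idx : R) (op : Monoid.com_law idx)
    (T : eqType) (r s : seq T) (F : T -> R) :
  uniq r -> {subset s <= r} ->
  \big[op/idx]_(x <- s) F x = \big[op/idx]_(x <- r) iterop (count_mem x s) op (F x) idx.
Proof.
move=> r_uniq s_r; rewrite -big_undup_iterop_count.
by apply: big_undup_cover => // x /count_memPn ->.
Qed.

Lemma mfactE (r s : seq nat) : uniq r -> {subset s <= r} ->
  mfact s = \prod_(x <- r) (count_mem x s)`!.
Proof. by move=> r_uniq s_r; apply: big_undup_cover => // x /count_memPn ->. Qed.

Lemma mfact_perm s t : perm_eq s t -> mfact s = mfact t.
Proof.
move=> st; rewrite (@mfactE (undup s) t) ?undup_uniq //; last first.
  by move=> x; rewrite mem_undup (perm_mem st).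
by apply: eq_bigr => x _; rewrite (permP st).
Qed.

Lemma mfact_nseq c x : mfact (nseq c x) = c`!.
Proof.
rewrite (@mfactE [:: x]) // ?big_seq1 ?count_nseq /= ?eqxx ?mul1n //.
by move=> y; rewrite mem_nseq inE => /andP[_ ->].
Qed.

Lemma fact_addn_dvd m n : m`! * n`! %| (m + n)`!.
Proof. by rewrite -(bin_fact (leq_addr n m)) addKn dvdn_mull. Qed.

Lemma mfact_cat_dvd a b : mfact a * mfact b %| mfact (a ++ b).
Proof.
pose r := undup (a ++ b); have r_uniq : uniq r := undup_uniq _.
have sub_r c : {subset c <= a ++ b} -> {subset c <= r}.
  by move=> c_ab x /c_ab; rewrite mem_undup.
rewrite (@mfactE r a) ?(@mfactE r b) ?(@mfactE r (a ++ b)) //; first last.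
- by apply: sub_r => x; rewrite mem_cat => ->.
- by apply: sub_r => x; rewrite mem_cat => ->; rewrite orbT.
- exact: sub_r.
rewrite -big_split /=; elim: r {r_uniq sub_r} => [|x r IH]; rewrite ?big_nil // !big_cons.
by rewrite dvdn_mul // count_cat fact_addn_dvd.
Qed.

Lemma mfact_cat_disjoint a b : (forall x, x \in a -> x \notin b) ->
  mfact (a ++ b) = mfact a * mfact b.
Proof.
move=> ab; rewrite (@mfactE (undup a ++ undup b)); last 2 first.
- rewrite cat_uniq !undup_uniq andbT; apply/hasPn => x.
  by rewrite !mem_undup => xb; apply/negP => /ab; rewrite xb.
- by move=> x; rewrite !mem_cat !mem_undup.
rewrite big_cat; congr (_ * _); apply: eq_big_seq => x; rewrite mem_undup count_cat.
  by move=> /ab/count_memPn ->; rewrite addn0.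
by move=> xb; rewrite (count_memPn (_ : x \notin a)) //; apply: contraL xb; apply: ab.
Qed.

Lemma mfact_rem x s : x \in s -> mfact s = count_mem x s * mfact (rem x s).
Proof.
move=> xs; have x_undup : x \in undup s by rewrite mem_undup.
rewrite (@mfactE (undup s) (rem x s)) ?undup_uniq /mfact //; last first.
  by move=> y /mem_rem; rewrite mem_undup.
rewrite !(bigD1_seq x) ?undup_uniq //= count_mem_rem eqxx subn1.
have c_pos : 0 < count_mem x s by rewrite -has_count has_pred1.
rewrite -{1}(prednK c_pos) factS mulnA prednK //; congr (_ * _).
by apply: eq_bigr => y /negbTE yx; rewrite count_mem_rem eq_sym yx subn0.
Qed.

Lemma perm_count_block x (s : seq nat) :
  perm_eq s (nseq (count_mem x s) x ++ filter (predC1 x) s).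
Proof.
have -> : nseq (count_mem x s) x = filter (pred1 x) s.
  by elim: s => //= y s IH; case: (eqVneq y x) => [->|yx]; rewrite /= ?eqxx ?(negbTE yx) IH.
by rewrite perm_sym (perm_filterC (pred1 x)).
Qed.

Lemma mfact_map_dvd (f : nat -> nat) s : mfact s %| mfact (map f s).
Proof.
have [n] := ubnP (size s); elim: n s => // n IH [|x s0] //; set s := x :: s0 => size_s.
have xs : x \in s := mem_head x s0.
pose s' := filter (predC1 x) s; pose c := count_mem x s.
have s'_size : size s' < n.
  have : c > 0 by rewrite -has_count has_pred1.
  by rewrite (perm_size (perm_count_block x s)) size_cat size_nseq -/s' -/c in size_s; lia.
have -> : mfact s = c`! * mfact s'.
  rewrite (mfact_perm (perm_count_block x s)) mfact_cat_disjoint ?mfact_nseq //.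
  by move=> y /nseqP[-> _]; rewrite mem_filter /= eqxx.
rewrite (mfact_perm (perm_map f (perm_count_block x s))) map_cat map_nseq.
apply: dvdn_trans (mfact_cat_dvd _ _); rewrite mfact_nseq dvdn_mul //.
exact: IH.
Qed.

Lemma mfact_map_cancel (f g : nat -> nat) s : {in s, cancel f g} ->
  mfact (map f s) = mfact s.
Proof.
move=> fK; apply/eqP; rewrite eqn_dvd mfact_map_dvd andbT.
have gfs : map g (map f s) = s by rewrite -map_comp; apply: map_id_in.
by rewrite -[X in _ %| mfact X]gfs mfact_map_dvd.
Qed.

Lemma mfact_dvd_fact s : mfact s %| (size s)`!.
Proof.
have -> : (size s)`! = mfact (map (fun=> 0) s).
  by rewrite (_ : map _ s = nseq (size s) 0) ?mfact_nseq //; elim: s => //= x s ->.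
exact: mfact_map_dvd.
Qed.

Lemma dvdn_size_sumn d (s : seq nat) : (forall x, x \in s -> d %| count_mem x s) ->
  d %| size s /\ d %| sumn s.
Proof.
move=> d_count; rewrite -sum1_size sumnE.
rewrite -[\sum_(x <- s) 1](big_undup_iterop_count _ _ xpredT).
rewrite -[\sum_(x <- s) x](big_undup_iterop_count _ _ xpredT) /=.
by split; rewrite big_seq; apply: dvdn_sum => x;
  rewrite mem_undup Monoid.iteropE iter_addn_0 => /d_count; apply: dvdn_mull.
Qed.

Lemma size_le_sumn (s : seq nat) : all (fun x => 0 < x) s -> size s <= sumn s.
Proof. by elim: s => //= x s IH /andP[x_pos /IH]; lia. Qed.

Lemma size_count_le_sumn (s : seq nat) z : all (fun x => 0 < x) s ->
  size s + count_mem z s * z.-1 <= sumn s.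
Proof.
elim: s => //= x s IH /andP[x_pos /IH].
case: (eqVneq x z) => [<-|xz]; rewrite ?eqxx ?(negbTE xz) /=; nia.
Qed.

Lemma sumn_map_succ s : sumn (map succn s) = sumn s + size s.
Proof. by elim: s => //= x s ->; rewrite addnS addSn addnA. Qed.

Lemma sumn_map_muln m s : sumn (map (muln m) s) = m * sumn s.
Proof. by rewrite !sumnE big_map big_distrr. Qed.

Definition all_but_one (T : eqType) (P : T -> Prop) (s : seq T) : Prop :=
  exists g, forall x, x \in s -> P x \/ (x = g /\ count_mem g s = 1).

Section AllButOne.

Variables (T : eqType) (P : T -> Prop).

Lemma all_but_one_cons r s : {in s, forall x, P x} -> all_but_one P (r :: s).
Proof.
move=> sP; exists r => x; rewrite inE => /predU1P[->|/sP]; last by left.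
case: (boolP (r \in s)) => [/sP|r_s]; first by left.
by right; rewrite /= eqxx (count_memPn r_s).
Qed.

Lemma all_but_one_catl a b : {in a, forall x, P x} -> all_but_one P b ->
  all_but_one P (a ++ b).
Proof.
move=> aP [g bP]; exists g => x; rewrite mem_cat => /orP[/aP|/bP]; first by left.
case=> [|[-> b_g]]; first by left.
case: (boolP (g \in a)) => [/aP|g_a]; first by left.
by right; rewrite count_cat b_g (count_memPn g_a).
Qed.

Lemma all_but_one_map (U : eqType) (Q : U -> Prop) (f : T -> U) s :
  {in s &, injective f} -> (forall x, P x -> Q (f x)) ->
  all_but_one P s -> all_but_one Q (map f s).
Proof.
move=> f_inj PQ [g sP]; exists (f g) => _ /mapP[x xs ->].
case: (sP x xs) => [/PQ|[xg s_g]]; first by left.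
right; split; first by rewrite xg.
rewrite count_map -s_g; apply: eq_in_count => y ys /=.
by rewrite -xg (inj_in_eq f_inj).
Qed.

End AllButOne.

Section PAdicValuation.

Variable p : nat.
Hypothesis p_prime : prime p.

Lemma logn_fact_addn m n : logn p m`! + logn p n`! <= logn p (m + n)`!.
Proof.
by rewrite -lognM ?fact_gt0 // dvdn_leq_log ?fact_gt0 ?fact_addn_dvd.
Qed.

Lemma logn_mfact_rem x s : x \in s ->
  logn p (mfact s) <= logn p (count_mem x s) + logn p (size s).-1`!.
Proof.
move=> xs; have c_pos : 0 < count_mem x s by rewrite -has_count has_pred1.
rewrite (mfact_rem xs) lognM ?mfact_gt0 // leq_add2l -(size_rem xs).
by rewrite dvdn_leq_log ?fact_gt0 ?mfact_dvd_fact.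
Qed.

Definition pval (w : seq nat) : nat := \sum_(x <- w) logn p x + logn p (mfact w).

Lemma pval_perm a b : perm_eq a b -> pval a = pval b.
Proof. by move=> ab; rewrite /pval (perm_big _ ab) (mfact_perm ab). Qed.

Lemma pval_cat a b : pval a + pval b <= pval (a ++ b).
Proof.
rewrite /pval big_cat /= addnACA leq_add2l -lognM ?mfact_gt0 //.
by rewrite dvdn_leq_log ?mfact_gt0 ?mfact_cat_dvd.
Qed.

Lemma pval_cons x s : logn p x + pval s <= pval (x :: s).
Proof.
by have := pval_cat [:: x] s; rewrite /pval [mfact [:: x]]/mfact /= !big_seq1 eqxx logn1 addn0.
Qed.

Lemma pval_nseq1 c : pval (nseq c 1) = logn p c`!.
Proof. by rewrite /pval mfact_nseq big1_seq // => x /nseqP[-> _]; rewrite logn1. Qed.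

Lemma pval_scale w : all (fun x => 0 < x) w -> pval (map (muln p) w) = size w + pval w.
Proof.
move=> w_pos; have p_pos := prime_gt0 p_prime.
rewrite /pval (mfact_map_cancel (g := divn^~ p)); last by move=> x _ /=; rewrite mulKn.
rewrite addnA big_map -sum1_size -big_split /=; congr (_ + _).
rewrite !big_seq; apply: eq_bigr => x /(allP w_pos) x_pos.
by rewrite lognM // (pfactorK 1).
Qed.

Lemma pval_le_ppart w : pval w <= pval (map (fun x => x`_p) w).
Proof.
rewrite /pval big_map leq_add // ?dvdn_leq_log ?mfact_gt0 ?mfact_map_dvd //.
by apply/eq_leq/eq_bigr => x _; rewrite logn_part.
Qed.

Lemma pval_split w :
  pval w = pval [seq x <- w | p %| x] + logn p (mfact [seq x <- w | ~~ (p %| x)]).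
Proof.
have /pval_perm <- : perm_eq ([seq x <- w | p %| x] ++ [seq x <- w | ~~ (p %| x)]) w.
  by apply/permPl; apply: perm_filterC.
rewrite /pval big_cat /= [\sum_(x <- [seq x <- w | ~~ _]) _]big1_seq ?addn0; last first.
  move=> x /andP[_]; rewrite mem_filter => /andP[x_p _].
  by apply: logn_coprime; rewrite prime_coprime.
rewrite mfact_cat_disjoint ?lognM ?mfact_gt0 ?addnA // => x.
by rewrite !mem_filter => /andP[-> _].
Qed.

Lemma ppart_gt1 x : 0 < x -> p %| x -> 1 < x`_p.
Proof. by move=> x_pos p_x; rewrite p_part_gt1 mem_primes p_prime x_pos. Qed.

Lemma pform_ppart x : 0 < x -> p %| x -> pform p (x`_p).-1.
Proof.
move=> x_pos p_x; exists (logn p x); last by rewrite p_part subn1.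
by rewrite logn_gt0 mem_primes p_prime x_pos.
Qed.

Lemma sumn_ppart_le w : all (fun x => 0 < x) w -> sumn (map (fun x => x`_p) w) <= sumn w.
Proof.
elim: w => //= x w IH /andP[x_pos /IH]; have := dvdn_leq x_pos (dvdn_part p x); lia.
Qed.

Lemma powers_cover_mfact Z : all (fun x => 0 < x) Z -> has (fun x => 1 < x) Z ->
  exists T, [/\ all (pnat p) T, size T = (size Z).-1, sumn T < sumn Z &
                logn p (mfact Z) <= pval T].
Proof.
move=> Z_pos /hasP[z zZ z_gt1]; have p_gt1 := prime_gt1 p_prime.
have c_pos : 0 < count_mem z Z by rewrite -has_count has_pred1.
have c_le : count_mem z Z <= size Z := count_size _ _.
have sum_ge : size Z + count_mem z Z <= sumn Z.
  by apply: leq_trans (size_count_le_sumn z Z_pos); rewrite leq_add2l leq_pmulr //; lia.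
have [[v vZ v_p] | all_p] := altP (@hasP _ (fun v => ~~ (p %| count_mem v Z)) Z).
  exists (nseq (size Z).-1 1); split.
  - by apply/allP => x /nseqP[-> _].
  - by rewrite size_nseq.
  - by rewrite sumn_nseq; lia.
  rewrite pval_nseq1; apply: leq_trans (logn_mfact_rem vZ) _.
  by rewrite logn_coprime ?prime_coprime.
(* Every multiplicity is a multiple of p, hence so is size Z, and (size Z).-1 is prime to p. *)
have Z_p v : v \in Z -> p %| count_mem v Z.
  by move=> vZ; apply: contraNT all_p => v_p; apply/hasP; exists v.
have [p_size _] := dvdn_size_sumn Z_p.
have p_le_c : p <= count_mem z Z by apply: dvdn_leq; last exact: Z_p.
set c := count_mem z Z in c_pos c_le sum_ge p_le_c.
have pc_le : p ^ logn p c <= c by rewrite -p_part dvdn_leq ?dvdn_part.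
exists (p ^ logn p c :: nseq (size Z - 2) 1); split.
- by rewrite /= pnatX pnat_id //=; apply/allP => x /nseqP[-> _].
- by rewrite /= size_nseq; lia.
- by rewrite /= sumn_nseq; lia.
apply: leq_trans (logn_mfact_rem zZ) _; apply: leq_trans (pval_cons _ _).
rewrite pfactorK // pval_nseq1 leq_add2l.
have -> : (size Z).-1 = (size Z - 2).+1 by lia.
rewrite factS lognM ?fact_gt0 // logn_coprime ?prime_coprime //.
apply/negP => p_pred; have := dvdn_sub p_size p_pred.
by rewrite (_ : size Z - (size Z - 2).+1 = 1) ?dvdn1 ?gtn_eqF //; lia.
Qed.

Lemma pval_reduce_heavy P Z : all (fun x => 0 < x) P -> all (fun x => 0 < x) Z ->
  has (fun x => 1 < x) Z ->
  exists w', [/\ all (fun x => 0 < x) w', all_but_one (fun x => p.-nat x) w',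
    size w' = size P + size Z, sumn w' = sumn P + sumn Z &
    pval P + logn p (mfact Z) <= pval w'].
Proof.
move=> P_pos Z_pos Z_heavy.
have [T [T_p T_size T_sum T_val]] := powers_cover_mfact Z_pos Z_heavy.
pose E := map (fun x => x`_p) P.
have E_sum : sumn E <= sumn P := sumn_ppart_le P_pos.
have Z_size : 0 < size Z by case: (Z) Z_heavy.
have TE_p : {in T ++ E, forall x, p.-nat x}.
  move=> x; rewrite mem_cat => /orP[/(allP T_p) //|/mapP[y _ ->]].
  exact: part_pnat.
exists (sumn P + sumn Z - sumn T - sumn E :: T ++ E); split.
- rewrite /= subn_gt0; apply/andP; split; first lia.
  by apply/allP => x /TE_p /andP[].
- exact: all_but_one_cons.
- by rewrite /= size_cat T_size size_map; lia.
- by rewrite /= sumn_cat; lia.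
have := pval_cons (sumn P + sumn Z - sumn T - sumn E) (T ++ E).
by have := pval_cat T E; have := pval_le_ppart P; rewrite -/E; lia.
Qed.

Lemma all_but_one_pnat_scale k w : all_but_one (fun x => p.-nat x) w ->
  all_but_one (fun x => p.-nat x) (nseq k 1 ++ map (muln p) w).
Proof.
move=> w_p; apply: all_but_one_catl; first by move=> x /nseqP[-> _].
apply: all_but_one_map w_p => [x y _ _|x]; last by rewrite pnatM pnat_id.
by move/eqP; rewrite eqn_pmul2l ?prime_gt0 // => /eqP.
Qed.

Theorem pval_reduce w : all (fun x => 0 < x) w ->
  exists w', [/\ all (fun x => 0 < x) w', all_but_one (fun x => p.-nat x) w',
    size w' = size w, sumn w' = sumn w & pval w <= pval w'].
Proof.
have p_pos := prime_gt0 p_prime.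
have [n] := ubnP (sumn w); elim: n w => // n IH w w_lt w_pos.
set P := [seq x <- w | p %| x]; set Z := [seq x <- w | ~~ (p %| x)].
have w_PZ : perm_eq (P ++ Z) w by apply/permPl; apply: perm_filterC.
have [P_pos Z_pos] : all (fun x => 0 < x) P /\ all (fun x => 0 < x) Z.
  by split; apply/allP => x; rewrite mem_filter => /andP[_ /(allP w_pos)].
rewrite -(perm_size w_PZ) -(perm_sumn w_PZ) size_cat sumn_cat pval_split -/P -/Z.
have [Z_heavy | Z_light] := boolP (has (fun x => 1 < x) Z).
  exact: pval_reduce_heavy.
(* The parts prime to p are all 1: divide the others by p and recurse. *)
have Z_ones : Z = nseq (size Z) 1.
  apply/all_pred1P/allP => x xZ; move/hasPn: Z_light => /(_ x xZ).
  by have := allP Z_pos x xZ; rewrite /= eqn_leq; lia.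
pose P' := map (divn^~ p) P.
have P_eq : P = map (muln p) P'.
  rewrite -map_comp -[LHS]map_id; apply/eq_in_map => x.
  by rewrite mem_filter => /andP[p_x _] /=; rewrite mulnC divnK.
have P'_pos : all (fun x => 0 < x) P'.
  apply/allP => _ /mapP[x xP ->]; rewrite divn_gt0 // dvdn_leq ?(allP P_pos) //.
  by move: xP; rewrite mem_filter => /andP[].
have [w3 [w3_pos w3_p w3_size w3_sum w3_val]] : exists w3,
  [/\ all (fun x => 0 < x) w3, all_but_one (fun x => p.-nat x) w3,
    size w3 = size P', sumn w3 = sumn P' & pval P' <= pval w3].
  have [-> | P'_neq0] := eqVneq P' [::]; first by exists [::]; split=> //; exists 0.
  apply: IH => //; move: w_lt; rewrite -(perm_sumn w_PZ) sumn_cat P_eq sumn_map_muln.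
  have := size_le_sumn P'_pos; have : 0 < size P' by case: (P') P'_neq0.
  by have := prime_gt1 p_prime; nia.
have Z_sum : sumn Z = size Z by rewrite {1}Z_ones sumn_nseq mul1n.
have Z_mfact : mfact Z = (size Z)`! by rewrite {1}Z_ones mfact_nseq.
exists (nseq (size Z) 1 ++ map (muln p) w3); split.
- by rewrite all_cat all_map; apply/andP; split; apply/allP => x;
    [move=> /nseqP[-> _] | move=> /(allP w3_pos); rewrite /= muln_gt0 p_pos].
- exact: all_but_one_pnat_scale.
- by rewrite size_cat size_nseq size_map w3_size size_map addnC.
- by rewrite sumn_cat sumn_nseq sumn_map_muln w3_sum -sumn_map_muln -P_eq Z_sum mul1n addnC.
rewrite Z_mfact addnC -pval_nseq1; apply: leq_trans (pval_cat _ _).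
by rewrite leq_add2l P_eq !pval_scale // w3_size leq_add2l.
Qed.

Lemma reduce_parts_dvd s : all (fun x => 0 < x) s -> {in s, forall x, p %| x.+1} ->
  exists s', [/\ all (fun x => 0 < x) s', all_but_one (pform p) s',
    size s' = size s, sumn s' = sumn s & pval (map succn s) <= pval (map succn s')].
Proof.
move=> s_pos s_p; have p_gt1 := prime_gt1 p_prime.
pose w := map (fun x => x.+1 %/ p) s.
have s_w : map succn s = map (muln p) w.
  by rewrite -map_comp; apply/eq_in_map => x /s_p p_x /=; rewrite mulnC divnK.
have w_pos : all (fun x => 0 < x) w.
  by apply/allP => _ /mapP[x /s_p p_x ->]; rewrite divn_gt0 ?prime_gt0 // dvdn_leq.
have [w' [w'_pos w'_p w'_size w'_sum w'_val]] := pval_reduce w_pos.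
have s'_w' : map succn (map (fun y => (p * y).-1) w') = map (muln p) w'.
  rewrite -map_comp; apply/eq_in_map => y /(allP w'_pos) y_pos /=.
  by rewrite prednK // muln_gt0 prime_gt0.
exists (map (fun y => (p * y).-1) w'); split.
- apply/allP => _ /mapP[y /(allP w'_pos) y_pos ->].
  by have := leq_pmulr p y_pos; lia.
- apply: all_but_one_map w'_p => [y z /(allP w'_pos) y_pos /(allP w'_pos) z_pos|y].
    move=> yz; apply/eqP; rewrite -(eqn_pmul2l (prime_gt0 p_prime)); apply/eqP.
    by have := leq_pmulr p y_pos; have := leq_pmulr p z_pos; lia.
  by case/p_natP=> a ->; exists a.+1; rewrite // expnS subn1.
- by rewrite size_map w'_size size_map.
- have := congr1 sumn s'_w'; rewrite sumn_map_succ sumn_map_muln w'_sum -sumn_map_muln -s_w.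
  by rewrite sumn_map_succ size_map w'_size size_map => /addIn.
by rewrite s'_w' s_w !pval_scale // w'_size leq_add2l.
Qed.

Lemma logn_fact_mfact A Z : 0 < size Z ->
  ({in Z, forall v, p %| count_mem v Z} -> ~~ (p %| A + size Z)) ->
  logn p A`! + logn p (mfact Z) <= logn p (A + (size Z).-1)`!.
Proof.
move=> Z_pos Z_p.
have [[v vZ v_p] | all_p] := altP (@hasP _ (fun v => ~~ (p %| count_mem v Z)) Z).
  apply: leq_trans _ (logn_fact_addn A (size Z).-1); rewrite leq_add2l.
  by apply: leq_trans (logn_mfact_rem vZ) _; rewrite logn_coprime ?prime_coprime.
have /Z_p A_p : {in Z, forall v, p %| count_mem v Z}.
  by move=> v vZ; apply: contraNT all_p => v_p; apply/hasP; exists v.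
have k_eq : A + size Z = (A + (size Z).-1).+1 by lia.
have := logn_fact_addn A (size Z); rewrite k_eq factS lognM ?fact_gt0 //.
rewrite -k_eq [logn p (A + size Z)]logn_coprime ?prime_coprime // add0n.
move=> /(leq_trans _); apply.
by rewrite leq_add2l dvdn_leq_log ?fact_gt0 ?mfact_dvd_fact.
Qed.

Lemma logn_fact_mfact_merge n (P Z : seq nat) :
    0 < n -> 0 < size Z -> {in P, forall x, p %| x} ->
    n + (size P + size Z) = sumn P + sumn Z ->
  logn p (n + size P - 1)`! + logn p (mfact Z) <= logn p (n + (size P + size Z) - 2)`!.
Proof.
move=> n_pos Z_size P_p n_sum.
have -> : n + (size P + size Z) - 2 = n + size P - 1 + (size Z).-1 by lia.
(* if p divides all multiplicities in Z, then p divides n + d = sumn P + sumn Z *)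
apply: (logn_fact_mfact Z_size) => /dvdn_size_sumn[p_size p_sum].
have P_dvd : p %| sumn P by rewrite sumnE big_seq; apply: dvdn_sum.
have : p %| n + size P - 1 + size Z + 1.
  by rewrite (_ : _ + 1 = sumn P + sumn Z); [apply: dvdn_add | lia].
by apply: contraL => p_A; rewrite dvdn_addr // dvdn1 gtn_eqF ?prime_gt1.
Qed.

Lemma reduce_parts_ndvd s : all (fun x => 0 < x) s -> has (fun x => ~~ (p %| x.+1)) s ->
  exists s', [/\ all (fun x => 0 < x) s', all_but_one (pform p) s',
    size s' <= size s, sumn s' = sumn s &
    logn p (sumn s + size s' - 2)`! + pval (map succn s) <=
    logn p (sumn s + size s - 2)`! + pval (map succn s')].
Proof.
move=> s_pos s_ndvd; set t := map succn s.
have t_pos : all (fun x => 0 < x) t by apply/allP => _ /mapP[x _ ->].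
set P := [seq x <- t | p %| x]; set Z := [seq x <- t | ~~ (p %| x)].
have t_PZ : perm_eq (P ++ Z) t by apply/permPl; apply: perm_filterC.
have [t_size t_sum] : size s = size P + size Z /\ sumn s + size s = sumn P + sumn Z.
  by rewrite -sumn_map_succ -(size_map succn s) -/t -(perm_size t_PZ) -(perm_sumn t_PZ)
    size_cat sumn_cat.
have [P_pos Z_pos] : all (fun x => 0 < x) P /\ all (fun x => 0 < x) Z.
  by split; apply/allP => x; rewrite mem_filter => /andP[_ /(allP t_pos)].
have [z zZ z_gt1] : exists2 z, z \in Z & 1 < z.
  case/hasP: s_ndvd => x xs x_ndvd; exists x.+1; last exact: (allP s_pos).
  by rewrite mem_filter x_ndvd map_f.
have Z_size : 0 < size Z by rewrite -has_predT; apply/hasP; exists z.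
have Z_sum : size Z < sumn Z.
  have := size_count_le_sumn z Z_pos; have : 0 < count_mem z Z by rewrite -has_count has_pred1.
  by nia.
pose E := map (fun x => (x`_p).-1) P.
have E_succ : map succn E = map (fun x => x`_p) P.
  by rewrite -map_comp; apply/eq_map => x /=; rewrite prednK ?part_gt0.
have E_sum : sumn E + size P <= sumn P.
  by rewrite -(size_map (fun x => (x`_p).-1)) -sumn_map_succ E_succ sumn_ppart_le.
have P_p x : x \in P -> 0 < x /\ p %| x.
  by rewrite mem_filter => /andP[p_x /(allP t_pos)].
exists (sumn s - sumn E :: E); split.
- rewrite /= subn_gt0; apply/andP; split; first lia.
  by apply/allP => _ /mapP[x /P_p[x_pos p_x] ->]; have := ppart_gt1 x_pos p_x; lia.
- by apply: all_but_one_cons => _ /mapP[x /P_p[x_pos p_x] ->]; apply: pform_ppart.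
- by rewrite /= size_map; lia.
- by rewrite /=; lia.
have s_sum : 0 < sumn s by lia.
have := logn_fact_mfact_merge s_sum Z_size (fun x xP => (P_p x xP).2).
rewrite -t_size => /(_ t_sum) fact_le.
have := pval_cons (sumn s - sumn E).+1 (map succn E); rewrite E_succ.
have := pval_le_ppart P; rewrite (pval_split t) -/P -/Z /= size_map.
rewrite E_succ (_ : sumn s + (size P).+1 - 2 = sumn s + size P - 1); lia.
Qed.

Lemma reduce_parts s : all (fun x => 0 < x) s ->
  exists s', [/\ all (fun x => 0 < x) s', all_but_one (pform p) s',
    size s' <= size s, sumn s' = sumn s &
    logn p (sumn s + size s' - 2)`! + pval (map succn s) <=
    logn p (sumn s + size s - 2)`! + pval (map succn s')].
Proof.
move=> s_pos.
have [s_ndvd | /hasPn s_dvd] := boolP (has (fun x => ~~ (p %| x.+1)) s).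
  exact: reduce_parts_ndvd.
have [s' [s'_pos s'_red s'_size s'_sum s'_val]] :=
  reduce_parts_dvd s_pos (fun x xs => negbNE (s_dvd x xs)).
by exists s'; rewrite s'_size leq_add2l.
Qed.

Lemma logn_gamma_parts s :
  logn p (\prod_(x <- s) x.+1 * mfact s) = pval (map succn s).
Proof.
rewrite /pval lognM ?mfact_gt0 ?prodn_gt0 // (@mfact_map_cancel _ predn) // big_map.
congr (_ + _); elim: s => [|x s IH]; first by rewrite !big_nil logn1.
by rewrite !big_cons lognM ?prodn_gt0 // IH.
Qed.

End PAdicValuation.

Fixpoint parts_from (k : nat) (u : ipartition) : seq nat :=
  if u is c :: u' then nseq c k ++ parts_from k.+1 u' else [::].

Definition parts (u : ipartition) : seq nat := parts_from 1 u.

Lemma count_parts_from u k i :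
  count_mem i (parts_from k u) = if k <= i then nth 0 u (i - k) else 0.
Proof.
elim: u k => [|c u IH] k /=; first by rewrite nth_nil; case: ifP.
rewrite count_cat count_nseq IH /= eq_sym.
case: (ltngtP k i) => [k_lt|//|->]; last by rewrite subnn mul1n addn0.
by rewrite mul0n add0n (_ : i - k = (i - k.+1).+1) //; lia.
Qed.

Lemma count_parts u i : 0 < i -> count_mem i (parts u) = mult u i.
Proof. by case: i => // i _; rewrite count_parts_from subn1. Qed.

Lemma parts_gt0 u : all (fun x => 0 < x) (parts u).
Proof.
suff parts_from_ge k : all (leq k) (parts_from k u) by apply: parts_from_ge.
elim: u k => //= c u IH k; rewrite all_cat; apply/andP; split.
  by apply/allP => x /nseqP[-> _].
by apply: sub_all (IH k.+1) => x; apply: ltnW.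
Qed.

Definition of_parts (s : seq nat) : ipartition :=
  mkseq (fun j => count_mem j.+1 s) (\max_(x <- s) x).

Lemma mult_of_parts s i : 0 < i -> mult (of_parts s) i = count_mem i s.
Proof.
case: i => // j _; rewrite /mult /of_parts.
have [j_lt | j_ge] := ltnP j (\max_(x <- s) x); first by rewrite nth_mkseq.
rewrite nth_default ?size_mkseq //; apply/esym/count_memPn/negP => js.
by have := @leq_bigmax_seq _ s xpredT (fun x => x) _ js isT; rewrite ltnNge j_ge.
Qed.

Lemma partition_stats u s : all (fun x => 0 < x) s ->
  (forall i, 0 < i -> mult u i = count_mem i s) ->
  [/\ weight u = sumn s, degree u = size s & gamma u = \prod_(x <- s) x.+1 * mfact s].
Proof.
move=> s_pos u_s; pose r := index_iota 1 (size u).+1.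
have r_uniq : uniq r := iota_uniq _ _.
have s_r : {subset s <= r}.
  move=> x xs; have x_pos := allP s_pos x xs; rewrite mem_index_iota x_pos ltnS.
  have : count_mem x s != 0 by rewrite -lt0n -has_count has_pred1.
  rewrite -u_s //; case: x x_pos {xs} => // x _ /=.
  by apply: contraR; rewrite -ltnNge => /(nth_default 0) ->.
have mult_count (R : Type) (idx : R) (op : Monoid.com_law idx) (F : nat -> nat -> R) :
    \big[op/idx]_(i <- r) F i (mult u i) = \big[op/idx]_(i <- r) F i (count_mem i s).
  by apply: eq_big_seq => i; rewrite mem_index_iota => /andP[i_pos _]; rewrite u_s.
split.
- rewrite /weight (mult_count _ _ _ (fun i c => i * c)) sumnE (big_count_cover _ _ r_uniq s_r).
  by apply: eq_bigr => i _; rewrite Monoid.iteropE iter_addn_0 mulnC.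
- rewrite /degree (mult_count _ _ _ (fun i c => c)) -sum1_size (big_count_cover _ _ r_uniq s_r).
  by apply: eq_bigr => i _; rewrite Monoid.iteropE iter_addn_0 mul1n.
rewrite /gamma (mult_count _ _ _ (fun i c => i.+1 ^ c * c`!)) big_split /=.
by rewrite (big_count_cover _ _ r_uniq s_r) (mfactE r_uniq s_r); congr (_ * _).
Qed.

Lemma vp_sign p k (q : rat) : vp p ((-1) ^+ k * q)%R = vp p q.
Proof.
rewrite /vp -signr_odd; case: (odd k); rewrite ?expr0 ?mul1r //.
by rewrite expr1 mulN1r numqN denqN abszN.
Qed.

Lemma vp_ratio p (a b : nat) : 0 < a -> 0 < b ->
  vp p (a%:R / b%:R) = ((logn p a)%:Z - (logn p b)%:Z)%R.
Proof.
move=> a_pos b_pos; set q : rat := (a%:R / b%:R)%R.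
have num_den : (`|numq q| * b = a * `|denq q|)%N.
  have b_neq0 : (b%:R : rat) != 0%R by rewrite pnatr_eq0 -lt0n.
  have num_q : ((numq q)%:~R = q * (denq q)%:~R :> rat)%R.
    by rewrite -{2}(divq_num_den q) mulfVK // intr_eq0 denq_neq0.
  have /(congr1 absz) : (numq q * b%:Z = a%:Z * denq q)%R.
    by apply: (@intr_inj rat); rewrite !intrM num_q /q mulrAC mulfVK.
  by rewrite !abszM.
have num_pos : (0 < `|numq q|)%N.
  by rewrite absz_gt0 numq_eq0 mulf_eq0 invr_eq0 !pnatr_eq0 negb_or -!lt0n a_pos b_pos.
have := congr1 (logn p) num_den; rewrite !lognM ?num_pos ?absz_gt0 ?denq_neq0 //.
by rewrite /vp; lia.
Qed.

Lemma gamma_gt0 u : 0 < gamma u.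
Proof. by rewrite prodn_gt0 // => i; rewrite muln_gt0 expn_gt0 fact_gt0. Qed.

Lemma vp_tau p u :
  vp p (tau u) = ((logn p (weight u + degree u - 2)`!)%:Z - (logn p (gamma u))%:Z)%R.
Proof. by rewrite /tau vp_sign vp_ratio ?fact_gt0 ?gamma_gt0. Qed.

Lemma reduced_of_parts p s : all_but_one (pform p) s -> reduced p (of_parts s).
Proof.
case=> g s_red; exists g => i i_pos; rewrite mult_of_parts // => i_count.
have /s_red[|[i_g s_g]] : i \in s by rewrite -has_pred1 has_count lt0n; apply/eqP.
  by left.
by right; subst g; rewrite mult_of_parts.
Qed.

Theorem exists_reduced_partition p u : prime p ->
  exists u', [/\ reduced p u', weight u' = weight u, degree u' <= degree u &
                 (vp p (tau u') <= vp p (tau u))%R].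
Proof.
move=> p_prime; have s_pos := parts_gt0 u.
have [u_n u_d u_g] := partition_stats s_pos (fun i i_pos => esym (count_parts u i_pos)).
have [s' [s'_pos s'_red s'_size s'_sum s'_val]] := reduce_parts p_prime s_pos.
have [u'_n u'_d u'_g] := partition_stats s'_pos (fun i i_pos => mult_of_parts s' i_pos).
exists (of_parts s'); split.
- exact: reduced_of_parts.
- by rewrite u'_n u_n.
- by rewrite u'_d u_d.
rewrite !vp_tau u'_n u'_d u'_g u_n u_d u_g !logn_gamma_parts s'_sum.
by move: s'_val; lia.
Qed.

Unset Implicit Arguments.
Theorem lemma3p2 (p m i : nat) (u : ipartition) :
  prime p -> odd p ->
  1 <= (m + i) * p - i ->
  weight u = (m + i) * p - i ->
  degree u <= i.+1 ->
  exists u' : ipartition,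
    [/\ reduced p u', weight u' = (m + i) * p - i, degree u' <= i.+1 &
        (vp p (tau u') <= vp p (tau u))%R].
Proof.
move=> p_prime _ _ u_n u_d.
have [u' [u'_red u'_n u'_d u'_vp]] := exists_reduced_partition u p_prime.
by exists u'; split; rewrite ?u'_n //; apply: leq_trans u_d.
Qed.
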